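(* Let $p$ be a prime, $V\in\mathbb{F}_p((X^{-1}))$ arbitrary, and $L\in\mathbb{F}_p((X^{-1}))$ irrational with continued fraction $[A_0;A_1,A_2,\ldots]$ and $d_h=\deg Q_h$. Let $m\in\mathbb{N}$ and $H\in\mathbb{N}$ with $d_H\le m<d_{H+1}$. Consider the point set of $p^m$ points in $[0,1)$ obtained from $\{k(X)L(X)+V(X)\}$ evaluated at $X=p$, where $k$ ranges over all polynomials in $\mathbb{F}_p[X]$ of degree $<m$. Then its star discrepancy satisfies $p^mD^*_{p^m}\le p^{\deg(A_{H+1}(L))}$.
   Context: Elements of $\mathbb{F}_p$ are identified with $\{0,\ldots,p-1\}$. For $M=\sum_{i=w}^\infty a_iX^{-i}$, $\{M\}=\sum_{i\ge\max(1,w)}a_iX^{-i}$, and if $\{M\}=\sum_{i\ge1}c_iX^{-i}$, its evaluation at $X=p$ is the real number $\sum_{i\ge1}c_ip^{-i}$. Irrational $L$ has unique continued fraction $[A_0;A_1,\ldots]$, $A_i\in\mathbb{F}_p[X]$, $\deg A_i\ge1$ for $i\ge1$; $A_{h}(L)=A_h$; convergents $P_h/Q_h=[A_0;\ldots,A_h]$ in lowest terms, $d_h=\deg Q_h=\sum_{i=1}^h\deg A_i$. For a point set $z_0,\ldots,z_{M-1}$ in $[0,1)$, $D_M^*=\sup_{0<\gamma\le1}|\#\{i:z_i<\gamma\}/M-\gamma|$. *)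

From Stdlib Require Import Reals ClassicalEpsilon.
From HB Require Import structures.
From mathcomp Require Import all_boot all_order all_algebra.

Set Implicit Arguments.
Unset Strict Implicit.
Unset Printing Implicit Defensive.

Import Order.TTheory GRing.Theory Num.Theory.

(* A Laurent series in X^{-1} over a field F is represented by its coefficient
   function  f : int -> F,  f n = coefficient of X^n, with only finitely many
   nonzero coefficients of positive degree. *)
Definition laurent (F : fieldType) (f : int -> F) : Prop :=
  exists N : int, forall n : int, (N < n)%O -> f n = 0%R.

Definition fracpart (F : fieldType) (f : int -> F) : int -> F :=
  fun n => if (n < (Posz 0))%O then f n else 0%R.

(* Coefficient of X^n in the product f*g, where f vanishes above degree N1
   and g vanishes above degree N2 (the sum ranges over all i <= N1 with
   n - i <= N2). *)
Definition mulc (F : fieldType) (N1 N2 : int) (f g : int -> F) (n : int) : F :=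
  (\sum_(k < (absz (N1 + N2 - n)%R).+1) f (N1 - Posz k)%R * g (n - N1 + Posz k)%R)%R.

Definition is_inv (F : fieldType) (f g : int -> F) : Prop :=
  exists N1 N2 : int,
    (forall n, (N1 < n)%O -> f n = 0%R) /\
    (forall n, (N2 < n)%O -> g n = 0%R) /\
    (forall n, mulc N1 N2 f g n = ((n == 0)%:R)%R).

Definition polymulc (F : fieldType) (Q : {poly F}) (f : int -> F) (n : int) : F :=
  (\sum_(j < size Q) (Q`_j)%R * f (n - Posz j)%R)%R.

Definition irrational (F : fieldType) (L : int -> F) : Prop :=
  ~ exists P Q : {poly F}, Q != 0%R /\
      forall n : int, polymulc Q L n = (if ((Posz 0) <= n)%O then (P`_(absz n))%R else 0%R).

(* A = (A_0, A_1, ...) is the continued fraction expansion of L: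
   complete quotients L_0 = L, A_i = polynomial part of L_i,
   (L_i - A_i) * L_{i+1} = 1, and deg A_i >= 1 for i >= 1. *)
Definition cont_frac (F : fieldType) (L : int -> F) (A : nat -> {poly F}) : Prop :=
  exists Lq : nat -> (int -> F),
    Lq 0%N = L /\
    forall i : nat,
      laurent (Lq i) /\
      (forall n : nat, ((A i)`_n)%R = Lq i (Posz n)) /\
      is_inv (fracpart (Lq i)) (Lq i.+1) /\
      ((0 < i)%N -> (1 < size (A i))%N).

(* Denominators of convergents: Q_{-1} = 0, Q_0 = 1,
   Q_h = A_h Q_{h-1} + Q_{h-2}.  cfQ2 A h = (Q_h, Q_{h+1}). *)
Fixpoint cfQ2 (F : fieldType) (A : nat -> {poly F}) (h : nat) : {poly F} * {poly F} :=
  match h with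
  | 0%N => (1%R, A 1%N)
  | h'.+1 => let (a, b) := cfQ2 A h' in (b, (A h'.+2 * b + a)%R)
  end.

Definition cfQ (F : fieldType) (A : nat -> {poly F}) (h : nat) : {poly F} :=
  (cfQ2 A h).1.

Definition cf_d (F : fieldType) (A : nat -> {poly F}) (h : nat) : nat :=
  (size (cfQ A h)).-1.

Definition Rltb (x y : R) : bool := if Rlt_dec x y then true else false.

(* evaluation at X = p of sum_{i>=1} c_i X^{-i}:  the real sum_{i>=1} c_i p^{-i}
   (c_i given as natural numbers in {0,...,p-1}). *)
Definition eval_at (p : nat) (c : nat -> nat) : R :=
  epsilon (inhabits R0)
    (fun x => infinite_sum (fun i => Rdiv (INR (c i.+1)) (pow (INR p) i.+1)) x).

(* The point attached to the polynomial k = sum_{j<m} kc_j X^j: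
   { k L + V } evaluated at X = p.  Elements of F_p are identified with
   {0,...,p-1} via nat_of_ord. *)
Definition point (p m : nat) (L V : int -> 'F_p) (kc : {ffun 'I_m -> 'F_p}) : R :=
  eval_at p (fun i => nat_of_ord
    ((\sum_(j < m) kc j * L (- (Posz i) - Posz (j : nat))%R + V (- (Posz i))%R)%R)).

Definition star_disc (I : finType) (z : I -> R) : R :=
  epsilon (inhabits R0)
    (fun s => is_lub (fun y => exists g : R, Rlt R0 g /\ Rle g R1 /\
        y = Rabs (Rminus (Rdiv (INR #|[pred i | Rltb (z i) g]|) (INR #|I|)) g)) s).

From Stdlib Require Import Reals ClassicalEpsilon Lra ZArith.
From mathcomp Require Import all_boot all_order all_algebra.
From mathcomp Require Import zify.

(* Write s = d_H and a = deg A_(H+1), so that s <= m < s + a.  The first s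
   base-p digits of the point attached to k are the coefficients of
   X^-1, ..., X^-s in k L + V.  Descending the continued fraction through the
   complete quotients L_i = A_i + 1/L_(i+1), one shows that a nonzero polynomial
   of degree < s cannot make all these coefficients of k L vanish.  Hence, once
   the coefficients of k of degree >= s are fixed, the first s digits determine k,
   and the p^m points fall exactly p^(m-s) at a time into each of the p^s cells
   [N p^-s, (N+1) p^-s].  This gives D* <= p^-s, so p^m D* <= p^(m-s) <= p^a. *)

Set Implicit Arguments.
Unset Strict Implicit.
Unset Printing Implicit Defensive.

Import Order.TTheory GRing.Theory.

Section WindowSums.
Variable F : fieldType.
Local Open Scope ring_scope.

Definition sum_window (lo : int) (c : nat) (G : int -> F) : F :=
  \sum_(t < c) G (lo + Posz t).

Lemma sum_windowD lo c1 c2 (G : int -> F) :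
  sum_window lo (c1 + c2) G = sum_window lo c1 G + sum_window (lo + Posz c1) c2 G.
Proof.
rewrite /sum_window big_split_ord /=; congr (_ + _).
by apply: eq_bigr => i _; rewrite PoszD addrA.
Qed.

Lemma sum_window_eq0 lo c (G : int -> F) :
  (forall x, (lo <= x)%O -> (x < lo + Posz c)%O -> G x = 0) -> sum_window lo c G = 0.
Proof.
move=> G0; rewrite /sum_window big1 // => i _; have hi := ltn_ord i; apply: G0; lia.
Qed.

Lemma sum_window_support lo c lo0 c0 (G : int -> F) :
  (forall x, G x != 0 -> (lo0 <= x)%O /\ (x < lo0 + Posz c0)%O) ->
  (lo <= lo0)%O -> (lo0 + Posz c0 <= lo + Posz c)%O ->
  sum_window lo c G = sum_window lo0 c0 G.
Proof.
move=> suppG h1 h2.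
have out0 x : ~~ ((lo0 <= x)%O && (x < lo0 + Posz c0)%O) -> G x = 0.
  by move=> hx; apply/eqP; apply: contraT => /suppG[? ?]; move: hx; lia.
set c1 := absz (lo0 - lo).
have -> : c = (c1 + (c0 + (c - c1 - c0)))%N by rewrite /c1; lia.
rewrite sum_windowD sum_window_eq0 ?add0r => [|x *]; last by apply: out0; lia.
have -> : lo + Posz c1 = lo0 by rewrite /c1; lia.
rewrite sum_windowD [sum_window (lo0 + _) _ _]sum_window_eq0 ?addr0 // => x *.
by apply: out0; lia.
Qed.

Lemma mulc_sum_window (f g : int -> F) N1 N2 n lo c :
  (forall x, (N1 < x)%O -> f x = 0) -> (forall x, (N2 < x)%O -> g x = 0) ->
  (lo <= n - N2)%O -> (N1 < lo + Posz c)%O ->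
  mulc N1 N2 f g n = sum_window lo c (fun u => f u * g (n - u)).
Proof.
move=> f0 g0 h1 h2.
have [hn|hn] := leP n (N1 + N2); last first.
  rewrite /mulc big1 => [|k _]; last by rewrite g0 ?mulr0 //; lia.
  rewrite sum_window_eq0 // => x _ _.
  by have [hx|hx] := leP x N1; [rewrite g0 ?mulr0 // | rewrite f0 ?mul0r //]; lia.
rewrite (@sum_window_support lo c (n - N2) (absz (N1 + N2 - n)%R).+1) //; last 2 first.
- move=> x; have [hx1|hx1] := leP x N1; last by rewrite f0 ?mul0r ?eqxx //; lia.
  have [hx2|hx2] := leP (n - x) N2; last by rewrite g0 ?mulr0 ?eqxx //; lia.
  by split; lia.
- lia.
rewrite /mulc /sum_window (reindex_inj rev_ord_inj) /=; apply: eq_bigr => k _.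
have := ltn_ord k => hk; congr (f _ * g _); lia.
Qed.

Lemma sum_window_mul_inv (kc : nat -> F) K (f g : int -> F) N1 N2 :
  (forall x, (N1 < x)%O -> f x = 0) -> (forall x, (N2 < x)%O -> g x = 0) ->
  (forall n, mulc N1 N2 f g n = (n == 0)%:R) ->
  forall n lo c, (lo <= n - N2)%O -> (N1 + Posz K <= lo + Posz c)%O ->
  sum_window lo c (fun u => (\sum_(j < K) kc j * f (u - Posz j)) * g (n - u))
  = \sum_(j < K) kc j * (n - Posz j == 0)%:R.
Proof.
move=> f0 g0 fg1 n lo c h1 h2; rewrite /sum_window.
under eq_bigr do rewrite mulr_suml.
rewrite exchange_big /=; apply: eq_bigr => j _.
rewrite -fg1 (@mulc_sum_window f g N1 N2 (n - Posz j) (lo - Posz j) c) //; last 2 first.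
- lia.
- have := ltn_ord j; lia.
rewrite /sum_window mulr_sumr; apply: eq_bigr => t _.
by rewrite -mulrA; congr (_ * (f _ * g _)); lia.
Qed.

Lemma sum_delta_nat (kc : nat -> F) K t :
  \sum_(j < K) kc j * (Posz t - Posz j == 0)%:R = if (t < K)%N then kc t else 0.
Proof.
case: ifP => htK.
  rewrite (bigD1 (Ordinal htK)) //= subrr eqxx mulr1 big1 ?addr0 // => j hj.
  suff /negbTE-> : Posz t - Posz j != 0 by rewrite mulr0.
  by apply: contra hj => /eqP h; apply/eqP/val_inj => /=; lia.
rewrite big1 // => j _; have := ltn_ord j => hj.
suff /negbTE-> : Posz t - Posz j != 0 by rewrite mulr0.
by apply/eqP; lia.
Qed.

Lemma sum_delta_neg (kc : nat -> F) K n :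
  (n < 0)%O -> \sum_(j < K) kc j * (n - Posz j == 0)%:R = 0.
Proof.
move=> hn; rewrite big1 // => j _.
suff /negbTE-> : n - Posz j != 0 by rewrite mulr0.
by apply/eqP; lia.
Qed.

Lemma sum_ord_trunc (kc X : nat -> F) D W :
  (D <= W)%N -> (forall j, (D <= j)%N -> kc j = 0) ->
  \sum_(j < W) kc j * X j = \sum_(j < D) kc j * X j.
Proof.
move=> hDW kc0; rewrite (big_ord_widen W (fun j => kc j * X j) hDW) [RHS]big_mkcond.
by apply: eq_bigr => i _; case: ifP => // /negbT; rewrite -leqNgt => /kc0->; rewrite mul0r.
Qed.

End WindowSums.

(* [frac_digits_inj L D]: a polynomial [k] of degree [< D] is determined by the
   coefficients of [X^-1, ..., X^-D] in [k L], i.e. by the first [D] digits of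
   [{k L}]; by linearity it suffices that these digits vanish only for [k = 0]. *)
Definition frac_digits_inj (F : fieldType) (L : int -> F) (D : nat) : Prop :=
  forall kc : nat -> F, (forall j, (D <= j)%N -> kc j = 0%R) ->
  (forall i, (0 < i <= D)%N -> (\sum_(j < D) kc j * L (- Posz i - Posz j))%R = 0%R) ->
  forall j, kc j = 0%R.

Lemma frac_digits_inj_fracpart (F : fieldType) (L : int -> F) D :
  frac_digits_inj (fracpart L) D -> frac_digits_inj L D.
Proof.
move=> injL kc kc0 digits0; apply: injL => // i hi; rewrite -[RHS](digits0 i hi).
by apply: eq_bigr => j _; rewrite /fracpart ifT //; lia.
Qed.

Section InverseStep.
Variable F : fieldType.
Local Open Scope ring_scope.

Variables (f g : int -> F) (N1 N2 : int) (a D : nat).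
Hypotheses (f_frac : forall x, (0 <= x)%O -> f x = 0)
  (f_supp : forall x, (N1 < x)%O -> f x = 0) (g_supp : forall x, (N2 < x)%O -> g x = 0)
  (fg1 : forall n, mulc N1 N2 f g n = (n == 0)%:R)
  (g_deg : forall x, (Posz a < x)%O -> g x = 0) (g_lead : g (Posz a) != 0)
  (g_inj : frac_digits_inj g D).

Section Coefficients.
Variable kc : nat -> F.
Hypotheses (kc_deg : forall j, (a + D <= j)%N -> kc j = 0)
  (kc_digits : forall i, (0 < i <= a + D)%N ->
     \sum_(j < a + D) kc j * f (- Posz i - Posz j) = 0).

Local Notation K := (a + D)%N.
Let kf (u : int) := \sum_(j < K) kc j * f (u - Posz j).

Let kf_ge u : (Posz K <= u)%O -> kf u = 0.
Proof.
move=> hu; rewrite /kf big1 // => j _; have := ltn_ord j => hj.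
by rewrite f_frac ?mulr0 //; lia.
Qed.

Let kf_digits u : (- Posz K <= u)%O -> (u < 0)%O -> kf u = 0.
Proof.
move=> h1 h2; have := kc_digits (i := absz (- u)) ltac:(lia).
by have -> : - Posz (absz (- u)) = u by lia.
Qed.

(* [kf u] is the coefficient of [X^u] in [k f].  It vanishes for [-(a + D) <= u < 0],
   so the coefficients of degree [>= -D] of [k = (k f) g] only involve the
   polynomial part of [k f]. *)
Let kf_mul_g n : (- Posz D <= n)%O ->
  \sum_(t < K) kf (Posz t) * g (n - Posz t) = \sum_(j < K) kc j * (n - Posz j == 0)%:R.
Proof.
move=> hn.
rewrite -(@sum_window_mul_inv _ kc K f g N1 N2 f_supp g_supp fg1 n
  (- Posz K - Posz (absz N2)) (absz N2 + (K + (K + absz N1)))); [|lia|lia].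
rewrite sum_windowD sum_window_eq0 ?add0r => [|x h1 h2]; last by rewrite g_deg ?mulr0 //; lia.
have -> : - Posz K - Posz (absz N2) + Posz (absz N2) = - Posz K by lia.
rewrite sum_windowD sum_window_eq0 ?add0r => [|x h1 h2]; last first.
  by rewrite -/(kf x) kf_digits ?mul0r //; lia.
have -> : - Posz K + Posz K = 0 by lia.
rewrite sum_windowD [sum_window (0 + _) _ _]sum_window_eq0 ?addr0 => [|x h1 h2]; last first.
  by rewrite -/(kf x) kf_ge ?mul0r //; lia.
by apply: eq_bigr => t _; rewrite add0r.
Qed.

(* Downward induction on [t], comparing coefficients of [X^(t + a)]: [g] has degree [a]. *)
Let kf_high t : (D <= t)%N -> kf (Posz t) = 0.
Proof.
suff kf_above : forall u t, (K <= t + u)%N -> (D <= t)%N -> kf (Posz t) = 0.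
  by move=> ht; apply: (kf_above K t (leq_addl _ _) ht).
move=> {t}; elim=> [|u IHu] t h1 h2; first by apply: kf_ge; lia.
have [h3|h3] := leqP K (t + u); first exact: IHu.
have htK : (t < K)%N by lia.
have := kf_mul_g (n := Posz t + Posz a) ltac:(lia).
rewrite -PoszD sum_delta_nat ifF; last by apply/negbTE; lia.
rewrite (bigD1 (Ordinal htK)) //= big1 ?addr0 => [|j hj]; last first.
  case: (ltngtP j t) => hjt.
  - by rewrite g_deg ?mulr0 //; lia.
  - by rewrite IHu ?mul0r //; lia.
  - by move: hj; rewrite (_ : j = Ordinal htK) ?eqxx //; apply: val_inj.
have -> : Posz (t + a) - Posz t = Posz a by lia.
by move/eqP; rewrite mulf_eq0 (negbTE g_lead) orbF => /eqP.
Qed.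

Let kf_nat0 t : kf (Posz t) = 0.
Proof.
move: t; apply: (@g_inj (fun t : nat => kf (Posz t))) => [j hj|i hi]; first exact: kf_high.
have := kf_mul_g (n := - Posz i) ltac:(lia).
rewrite sum_delta_neg; last by lia.
rewrite (@sum_ord_trunc _ (fun t => kf (Posz t)) (fun t => g (- Posz i - Posz t)) D K) //.
by lia.
Qed.

Lemma frac_digits_inj_inv_coef j : kc j = 0.
Proof.
have := kf_mul_g (n := Posz j) ltac:(lia).
rewrite big1 => [|t _]; last by rewrite kf_nat0 mul0r.
rewrite sum_delta_nat; case: ifP => hj; first by move/esym.
by move=> _; apply: kc_deg; lia.
Qed.

End Coefficients.

Lemma frac_digits_inj_inv : frac_digits_inj f (a + D).
Proof. by move=> kc; apply: frac_digits_inj_inv_coef. Qed.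

End InverseStep.

Section ContinuedFractionDegrees.
Variables (F : fieldType) (A : nat -> {poly F}).

Definition cf_degsum (i h : nat) : nat :=
  \sum_(i.+1 <= t < (i + h).+1) (size (A t)).-1.

Lemma cf_degsumSl i h : cf_degsum i h.+1 = ((size (A i.+1)).-1 + cf_degsum i.+1 h)%N.
Proof. by rewrite /cf_degsum big_ltn ?addSnnS //; lia. Qed.

Lemma cf_degsumSr i h : cf_degsum i h.+1 = (cf_degsum i h + (size (A (i + h.+1))).-1)%N.
Proof. by rewrite /cf_degsum -addSnnS big_nat_recr //=; lia. Qed.

Hypothesis A_nonconst : forall t, (0 < t)%N -> (1 < size (A t))%N.

Lemma size_cfQ2 h :
  size (cfQ2 A h).1 = (cf_degsum 0 h).+1 /\ size (cfQ2 A h).2 = (cf_degsum 0 h.+1).+1.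
Proof.
elim: h => [|h [IH1 IH2]].
  rewrite /cf_degsum /= size_poly1 big_geq // big_nat1; split => //.
  by have := A_nonconst (ltn0Sn 0); case: (size (A 1%N)).
rewrite /=; case: (cfQ2 A h) IH1 IH2 => q0 q1 /= IH1 IH2; split => //.
have szA := A_nonconst (ltn0Sn h.+1).
have nzA : A h.+2 != 0%R by rewrite -size_poly_eq0; lia.
have nzq1 : q1 != 0%R by rewrite -size_poly_eq0 IH2.
have szAq1 : size (A h.+2 * q1)%R = (cf_degsum 0 h.+2).+1.
  rewrite size_mul // IH2 (cf_degsumSr 0 h.+1) add0n.
  by set n := size (A h.+2) in szA *; lia.
have szA1 := A_nonconst (ltn0Sn h).
by rewrite size_polyDl szAq1 // IH1 (cf_degsumSr 0 h.+1) (cf_degsumSr 0 h) !add0n; lia.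
Qed.

Lemma cf_d_degsum h : cf_d A h = cf_degsum 0 h.
Proof. by rewrite /cf_d /cfQ (proj1 (size_cfQ2 h)). Qed.

End ContinuedFractionDegrees.

(* The complete quotients satisfy [L_i = A_i + 1/L_(i+1)] with [deg A_(i+1) >= 1],
   so [frac_digits_inj_inv] passes from [L_(i+1)] to [L_i], gaining [deg A_(i+1)] digits. *)
Lemma frac_digits_inj_cf (F : fieldType) (L : int -> F) A h :
  cont_frac L A -> frac_digits_inj L (cf_degsum A 0 h).
Proof.
case=> Lq [<- Lq_cf].
suff : forall i, frac_digits_inj (Lq i) (cf_degsum A i h) by apply.
elim: h => [|h IH] i.
  by move=> kc kc0 _ j; apply: kc0; rewrite /cf_degsum addn0 big_geq.
rewrite cf_degsumSl; apply: frac_digits_inj_fracpart.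
have [_ [_ [[N1 [N2 [f_supp [g_supp fg1]]]] _]]] := Lq_cf i.
have [_ [coefA [_ szA]]] := Lq_cf i.+1.
have {}szA := szA (ltn0Sn i).
apply: (frac_digits_inj_inv _ f_supp g_supp fg1 _ _ (IH i.+1)).
- by move=> x hx; rewrite /fracpart ifF //; apply/negbTE; lia.
- move=> x hx; have -> : x = Posz (absz x) by lia.
  by rewrite -coefA nth_default //; move: hx szA; case: (size (A i.+1)) => /=; lia.
- rewrite -coefA; have -> : ((A i.+1)`_(size (A i.+1)).-1 = lead_coef (A i.+1))%R by [].
  by rewrite lead_coef_eq0 -size_poly_eq0; lia.
Qed.

Lemma leq_INR m n : (m <= n)%N -> Rle (INR m) (INR n).
Proof. by move/ssrnat.leP/le_INR. Qed.

Lemma INR_expn p s : INR (p ^ s) = pow (INR p) s.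
Proof. by elim: s => [|s IH] //; rewrite expnS mult_INR IH. Qed.

Section RealLimits.
Local Open Scope R_scope.

Lemma Un_cv_bounds (u : nat -> R) x lo hi N :
  Un_cv u x -> (forall n, (N <= n)%coq_nat -> lo <= u n <= hi) -> lo <= x <= hi.
Proof.
move=> ux u_bd; split; apply: Rnot_lt_le => hx.
- have [M hM] := ux (lo - x) ltac:(lra).
  have := hM (Nat.max M N) (Nat.le_max_l _ _); have := u_bd (Nat.max M N) (Nat.le_max_r _ _).
  by rewrite /R_dist; have := Rle_abs (u (Nat.max M N) - x); lra.
- have [M hM] := ux (x - hi) ltac:(lra).
  have := hM (Nat.max M N) (Nat.le_max_l _ _); have := u_bd (Nat.max M N) (Nat.le_max_r _ _).
  by rewrite /R_dist Rabs_minus_sym; have := Rle_abs (x - u (Nat.max M N)); lra.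
Qed.

End RealLimits.

Fixpoint digits_num (p : nat) (c : nat -> nat) (s : nat) : nat :=
  if s is s'.+1 then (p * digits_num p c s' + c s)%N else 0%N.

Section BaseDigits.
Variables (p : nat) (c : nat -> nat).
Local Notation num := (digits_num p c).

Lemma leq_digits_num_addn s t : (num s * p ^ t <= num (s + t))%N.
Proof.
elim: t => [|t IH]; first by rewrite muln1 addn0.
by rewrite addnS /= expnS; have := leq_mul (leqnn p) IH; nia.
Qed.

Hypothesis c_lt : forall i, (c i < p)%N.

Lemma digits_num_ltn s : (num s < p ^ s)%N.
Proof. by elim: s => [|s IH] //=; rewrite expnS; have := c_lt s.+1; nia. Qed.

Lemma ltn_digits_num_addn s t : (num (s + t) < (num s).+1 * p ^ t)%N.
Proof.
elim: t => [|t IH]; first by rewrite muln1 addn0.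
by rewrite addnS /= expnS; have := c_lt (s + t).+1; have := leq_mul (leqnn p) IH; nia.
Qed.

Lemma digits_num_inj (c' : nat -> nat) s : (forall i, (c' i < p)%N) ->
  num s = digits_num p c' s -> forall i, (0 < i <= s)%N -> c i = c' i.
Proof.
move=> c'_lt; elim: s => [|s IH] /= E i hi; first by lia.
have p_gt0 : (0 < p)%N by have := c_lt 0; lia.
have Elast : c s.+1 = c' s.+1.
  by have := congr1 (modn^~ p) E; rewrite /= ![(p * _)%N]mulnC !modnMDl !modn_small.
have Einit : num s = digits_num p c' s.
  have := congr1 (divn^~ p) E; rewrite /= ![(p * _)%N]mulnC !divnMDl //.
  by rewrite !divn_small ?addn0.
case: (ltngtP i s.+1) => [hi2|hi2|->] //; first by apply: IH => //; lia.
by lia.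
Qed.

Local Open Scope R_scope.

Lemma sum_digits n :
  sum_f_R0 (fun i => INR (c i.+1) / INR p ^ i.+1) n = INR (num n.+1) / INR p ^ n.+1.
Proof.
have p_gt0 : INR p <> 0 by apply: not_0_INR; have := c_lt 0; lia.
elim: n => [|n IH]; first by rewrite /= muln0 add0n.
rewrite tech5 IH; set e := num n.+1.
have -> : num n.+2 = (p * e + c n.+2)%N by [].
clearbody e; rewrite plus_INR mult_INR -!tech_pow_Rmult.
by field; split => //; apply: pow_nonzero.
Qed.

Lemma sum_digits_bounds s t :
  INR (num s) / INR p ^ s <= INR (num (s + t)) / INR p ^ (s + t)
  <= (INR (num s) + 1) / INR p ^ s.
Proof.
have p_gt0 : 0 < INR p by apply: lt_0_INR; have := c_lt 0; lia.
have ps_gt0 := pow_lt _ s p_gt0; have pt_gt0 := pow_lt _ t p_gt0.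
have lo := leq_INR (leq_digits_num_addn s t).
have hi := leq_INR (ltn_digits_num_addn s t).
rewrite mult_INR INR_expn in lo; rewrite S_INR mult_INR S_INR INR_expn in hi.
rewrite pow_add; split.
- apply: (Rmult_le_reg_r (INR p ^ s * INR p ^ t)); first exact: Rmult_lt_0_compat.
  by field_simplify; lra.
- apply: (Rmult_le_reg_r (INR p ^ s * INR p ^ t)); first exact: Rmult_lt_0_compat.
  by field_simplify; lra.
Qed.

Lemma eval_at_bounds s :
  INR (num s) / INR p ^ s <= eval_at p c <= (INR (num s) + 1) / INR p ^ s.
Proof.
set u := fun i => INR (c i.+1) / INR p ^ i.+1.
have p_gt0 : 0 < INR p by apply: lt_0_INR; have := c_lt 0; lia.
have u_ge0 i : 0 <= u i.
  by apply: Rmult_le_pos; [apply: pos_INR | apply/Rlt_le/Rinv_0_lt_compat/pow_lt].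
have sum_ub : has_ub (sum_f_R0 u).
  exists 1 => _ [n ->]; rewrite sum_digits.
  by have := proj2 (sum_digits_bounds 0 n.+1); rewrite add0n /=; lra.
have sum_grow : Un_growing (sum_f_R0 u) by move=> n; rewrite tech5; have := u_ge0 n.+1; lra.
have [x ux] := growing_cv _ sum_grow sum_ub.
have := epsilon_spec (inhabits R0) _ (ex_intro _ x ux); rewrite -/u => eval_u.
apply: (Un_cv_bounds (N := s) eval_u) => n hn.
rewrite sum_digits -(subnKC (_ : s <= n.+1)%N); last by apply/ssrnat.leP; lia.
exact: sum_digits_bounds.
Qed.

End BaseDigits.

Section TailClasses.
Variables (F : finZmodType) (m s : nat).
Local Open Scope ring_scope.

Definition glue (h : {ffun 'I_s -> F}) (t : {ffun 'I_m -> F}) : {ffun 'I_m -> F} :=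
  [ffun i : 'I_m => if insub (val i) : option 'I_s is Some j then h j else t i].

Definition head_zero (t : {ffun 'I_m -> F}) : {ffun 'I_m -> F} := glue 0 t.

Definition tails : {set {ffun 'I_m -> F}} :=
  [set t : {ffun 'I_m -> F} | [forall i : 'I_m, (i < s)%N ==> (t i == 0)]].

Lemma glue_high (h : {ffun 'I_s -> F}) (t : {ffun 'I_m -> F}) (i : 'I_m) :
  (s <= i)%N -> glue h t i = t i.
Proof. by move=> hi; rewrite ffunE insubF // ltnNge hi. Qed.

Lemma glue_low (h : {ffun 'I_s -> F}) (t : {ffun 'I_m -> F}) (i : 'I_m) (j : 'I_s) :
  val i = val j -> glue h t i = h j.
Proof. by move=> eij; rewrite ffunE eij valK. Qed.

Lemma head_zero_tails (t : {ffun 'I_m -> F}) : head_zero t \in tails.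
Proof.
rewrite inE; apply/forallP => i; apply/implyP => hi.
by rewrite (glue_low _ _ (j := Ordinal hi)) // ffunE.
Qed.

Lemma head_zero_glue (h : {ffun 'I_s -> F}) (t : {ffun 'I_m -> F}) :
  t \in tails -> head_zero (glue h t) = t.
Proof.
rewrite inE => /forallP t0; apply/ffunP => i; case: (ltnP i s) => hi.
  by rewrite (glue_low _ _ (j := Ordinal hi)) // ffunE; move/implyP/(_ hi)/eqP: (t0 i).
by rewrite !glue_high.
Qed.

Hypothesis s_le_m : (s <= m)%N.

Lemma glue_inj (t : {ffun 'I_m -> F}) : injective (glue^~ t).
Proof.
move=> h h' E; apply/ffunP => j.
have := congr1 (fun f : {ffun 'I_m -> F} => f (widen_ord s_le_m j)) E.
by rewrite /= !(glue_low _ _ (j := j)).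
Qed.

(* Within a fiber, [head_zero] is injective; conversely, for each tail [t], the map
   [h |-> Phi (glue h t)] is an injection between sets of size [n], hence onto. *)
Lemma card_fiber_tail_inj n (Phi : {ffun 'I_m -> F} -> 'I_n) :
  (#|F| ^ s)%N = n ->
  (forall kc kc' : {ffun 'I_m -> F},
     (forall i : 'I_m, (s <= i)%N -> kc i = kc' i) -> Phi kc = Phi kc' -> kc = kc') ->
  forall N, #|[set kc | Phi kc == N]| = #|tails|.
Proof.
move=> card_n Phi_inj N.
rewrite -(@card_in_imset _ _ head_zero) => [|kc kc']; last first.
  rewrite !inE => /eqP Phi_kc /eqP Phi_kc' E; apply: Phi_inj; last by rewrite Phi_kc Phi_kc'.
  move=> i hi.
  by have := congr1 (fun f : {ffun 'I_m -> F} => f i) E; rewrite /= !glue_high.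
apply: eq_card => t; apply/imsetP/idP => [[kc _ ->]|tailt]; first exact: head_zero_tails.
have Phi_glue_inj : injective (fun h => Phi (glue h t)).
  by move=> h h' E; apply: (@glue_inj t); apply: Phi_inj E => i hi; rewrite !glue_high.
have := @inj_card_onto _ _ _ Phi_glue_inj _ N.
rewrite card_ord card_ffun card_ord card_n leqnn => /(_ isT) /codomP [h Eh].
by exists (glue h t); rewrite ?inE -?Eh ?head_zero_glue.
Qed.

End TailClasses.

Lemma card_preimage_ltn (I : finType) n (Phi : I -> 'I_n) T :
  (forall N, #|[set i | Phi i == N]| = T) ->
  forall j, (j <= n)%N -> #|[set i | (Phi i < j)%N]| = (j * T)%N.
Proof.
move=> fiberT j hj.
rewrite -sum1_card (partition_big Phi (fun N : 'I_n => (N < j)%N)) => [|i]; last by rewrite inE.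
rewrite (eq_bigr (fun _ => T)) => [|N hN]; last first.
  rewrite -(fiberT N) -sum1_card; apply: eq_bigl => i; rewrite !inE.
  by case: (Phi i =P N) => [->|_]; rewrite ?hN ?andbF ?andbT.
by rewrite -(big_ord_widen n (fun _ => T) hj) sum_nat_const card_ord.
Qed.

Lemma card_uniform_fibers (I : finType) n (Phi : I -> 'I_n) T :
  (forall N, #|[set i | Phi i == N]| = T) -> #|I| = (n * T)%N.
Proof.
move=> fiberT; rewrite -(card_preimage_ltn fiberT (leqnn n)).
by apply: eq_card => i; rewrite !inE ltn_ord.
Qed.

Section StarDiscrepancy.
Local Open Scope R_scope.
Variables (I : finType) (z : I -> R).

Lemma RltbP x y : Rltb x y = true <-> x < y.
Proof. by rewrite /Rltb; case: Rlt_dec => h; split. Qed.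

Lemma star_disc_le b :
  (forall g, 0 < g -> g <= 1 -> Rabs (INR #|[pred i | Rltb (z i) g]| / INR #|I| - g) <= b) ->
  star_disc z <= b.
Proof.
move=> err_le; rewrite /star_disc.
set E := fun y => exists g, _.
have E_ub : is_upper_bound E b by move=> y [g [g_gt0 [g_le1 ->]]]; exact: err_le.
have E1 : E (Rabs (INR #|[pred i | Rltb (z i) 1]| / INR #|I| - 1)).
  by exists 1; split; [exact: Rlt_0_1 | split; [exact: Rle_refl |]].
have [l l_lub] := completeness E (ex_intro _ _ E_ub) (ex_intro _ _ E1).
exact: (proj2 (epsilon_spec (inhabits R0) _ (ex_intro _ l l_lub)) _ E_ub).
Qed.

Lemma floor_pos x : 0 < x -> exists j : nat, INR j < x <= INR j + 1.
Proof.
move=> x_gt0; have [h1 h2] := archimed (- x).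
have up_lt1 : Z.lt (up (- x)) 1 by apply: lt_IZR; lra.
exists (Z.to_nat (Z.opp (up (- x)))); rewrite INR_IZR_INZ Z2Nat.id; last by lia.
by rewrite opp_IZR; lra.
Qed.

Lemma Rabs_count_sub_le (n T C j g : R) : 0 < n -> 0 < T ->
  j * T <= C <= (j + 1) * T -> j < g * n <= j + 1 -> Rabs (C / (n * T) - g) <= / n.
Proof.
move=> n_gt0 T_gt0 [C_lo C_hi] [g_lo g_hi].
have -> : C / (n * T) - g = (C / T - g * n) / n by field; lra.
have CT_lo : j <= C / T by apply: (Rmult_le_reg_r T) => //; field_simplify; lra.
have CT_hi : C / T <= j + 1 by apply: (Rmult_le_reg_r T) => //; field_simplify; lra.
rewrite Rabs_mult Rabs_inv (Rabs_pos_eq n); last by lra.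
rewrite -[X in _ <= X]Rmult_1_l; apply: Rmult_le_compat_r.
  by apply/Rlt_le/Rinv_0_lt_compat.
by apply: Rabs_le; lra.
Qed.

(* With [j = ceil (g n) - 1], the count [#{i | z i < g}] lies between the number
   of points in the first [j] cells and in the first [j + 1] cells. *)
Lemma star_disc_le_uniform_cells n T (Phi : I -> 'I_n) :
  (0 < n)%N -> (0 < T)%N -> (forall N, #|[set i | Phi i == N]| = T) ->
  (forall i, INR (Phi i) / INR n <= z i <= (INR (Phi i) + 1) / INR n) ->
  star_disc z <= / INR n.
Proof.
move=> n_gt0 T_gt0 fiberT z_cell; apply: star_disc_le => g g_gt0 g_le1.
have n_pos : 0 < INR n by apply: lt_0_INR; apply/ssrnat.ltP.
have [j [j_lt j_ge]] := floor_pos (Rmult_lt_0_compat _ _ g_gt0 n_pos).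
have j_lt_n : (j < n)%N.
  by apply/ssrnat.ltP/INR_lt; nra.
set C := #|[pred i | Rltb (z i) g]|.
have C_lo : (j * T <= C)%N.
  rewrite -(card_preimage_ltn fiberT (ltnW j_lt_n)); apply/subset_leq_card/subsetP => i.
  rewrite !inE => Phi_lt; apply/RltbP; have [_ z_hi] := z_cell i.
  have := leq_INR Phi_lt; rewrite S_INR => Phi_le.
  apply: (Rle_lt_trans _ _ _ z_hi); apply: (Rmult_lt_reg_r (INR n)) => //.
  by field_simplify; lra.
have C_hi : (C <= j.+1 * T)%N.
  rewrite -(card_preimage_ltn fiberT j_lt_n); apply/subset_leq_card/subsetP => i.
  rewrite !inE => /RltbP z_lt; have [z_lo _] := z_cell i.
  suff : INR (Phi i) < INR j.+1 by move/INR_lt/ssrnat.ltP.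
  rewrite S_INR; suff : INR (Phi i) < g * INR n by lra.
  by apply: (Rmult_lt_reg_r (/ INR n)); [apply: Rinv_0_lt_compat | field_simplify; lra].
rewrite (card_uniform_fibers fiberT) mult_INR.
apply: (Rabs_count_sub_le (j := INR j)) => //; first by apply: lt_0_INR; apply/ssrnat.ltP.
by split; [rewrite -mult_INR | rewrite -S_INR -mult_INR]; apply: leq_INR.
Qed.

End StarDiscrepancy.

Section PointDigits.
Variables (p m : nat) (L V : int -> 'F_p).
Hypothesis p_prime : prime p.

Definition point_digit (kc : {ffun 'I_m -> 'F_p}) (i : nat) : nat :=
  nat_of_ord ((\sum_(j < m) kc j * L (- Posz i - Posz j) + V (- Posz i))%R).

Lemma point_digitE kc : point L V kc = eval_at p (point_digit kc).
Proof. by []. Qed.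

Lemma point_digit_lt kc i : (point_digit kc i < p)%N.
Proof. by rewrite /point_digit -[X in (_ < X)%N](Fp_cast p_prime). Qed.

Variable s : nat.
Hypotheses (s_le_m : (s <= m)%N) (L_inj : frac_digits_inj L s).

Lemma point_digits_inj (kc kc' : {ffun 'I_m -> 'F_p}) :
  (forall i : 'I_m, (s <= i)%N -> kc i = kc' i) ->
  digits_num p (point_digit kc) s = digits_num p (point_digit kc') s -> kc = kc'.
Proof.
move=> tail_eq digits_eq.
have digit_eq := digits_num_inj (point_digit_lt kc) (point_digit_lt kc') digits_eq.
pose dk n := if insub n : option 'I_m is Some j then (kc j - kc' j)%R else 0%R.
have dk_ord (j : 'I_m) : dk j = (kc j - kc' j)%R by rewrite /dk valK.
apply/ffunP => j; apply/eqP; rewrite -subr_eq0 -dk_ord; apply/eqP.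
have dk_high n : (s <= n)%N -> dk n = 0%R.
  by rewrite /dk; case: insubP => [j' _ <- /tail_eq->|]; rewrite ?subrr.
apply: (@L_inj dk dk_high) => i hi.
rewrite -(@sum_ord_trunc _ dk (fun j => L (- Posz i - Posz j)) s m s_le_m dk_high).
under eq_bigr do rewrite dk_ord mulrBl.
rewrite sumrB; apply/eqP; rewrite subr_eq0; apply/eqP.
by have /ord_inj := digit_eq i hi; apply: addIr.
Qed.

Definition point_cell (kc : {ffun 'I_m -> 'F_p}) : 'I_(p ^ s) :=
  Ordinal (digits_num_ltn (point_digit_lt kc) s).

Lemma card_point_cell N : #|[set kc | point_cell kc == N]| = (p ^ (m - s))%N.
Proof.
have fiberT := card_fiber_tail_inj s_le_m (Phi := point_cell)
  (congr1 (expn^~ s) (card_Fp p_prime))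
  (fun kc kc' tail_eq E => point_digits_inj tail_eq (congr1 val E)).
have pow_gt0 k : (0 < p ^ k)%N by rewrite expn_gt0 prime_gt0.
apply/eqP; rewrite -(eqn_pmul2l (pow_gt0 s)) -expnD subnKC // fiberT; apply/eqP.
by rewrite -(card_uniform_fibers fiberT) card_ffun !card_ord (Fp_cast p_prime).
Qed.

Lemma star_disc_point_le : Rle (star_disc (@point p m L V)) (Rinv (INR (p ^ s))).
Proof.
have pow_gt0 k : (0 < p ^ k)%N by rewrite expn_gt0 prime_gt0.
apply: (star_disc_le_uniform_cells (pow_gt0 s) (pow_gt0 (m - s)) card_point_cell) => kc.
by rewrite INR_expn point_digitE; exact: eval_at_bounds (point_digit_lt kc) s.
Qed.

End PointDigits.

Theorem lemma5 (p : nat) (Hp : prime p) (L V : int -> 'F_p)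
  (HL : laurent L) (HV : laurent V) (Hirr : irrational L)
  (A : nat -> {poly 'F_p}) (HA : cont_frac L A)
  (m H : nat) (HmH : (cf_d A H <= m < cf_d A H.+1)%N) :
  Rle (Rmult (INR (p ^ m)) (star_disc (@point p m L V))) (pow (INR p) (size (A H.+1)).-1).
Proof.
have A_nonconst t : (0 < t)%N -> (1 < size (A t))%N.
  by case: HA => Lq [_ Lq_cf]; have [_ [_ [_ ]]] := Lq_cf t.
set s := cf_d A H; set a := (size (A H.+1)).-1.
have L_inj : frac_digits_inj L s by rewrite /s cf_d_degsum //; exact: frac_digits_inj_cf.
move: HmH; rewrite /s !cf_d_degsum // cf_degsumSr add0n -cf_d_degsum // -/s -/a.
case/andP=> s_le_m m_lt.
have p_gt1 := prime_gt1 Hp.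
have p_pos : Rlt 0 (INR p) by apply/lt_0_INR/ssrnat.ltP; lia.
apply: (Rle_trans _ (Rmult (INR (p ^ m)) (Rinv (INR (p ^ s))))).
  by apply: Rmult_le_compat_l; [apply: pos_INR | exact: star_disc_point_le].
rewrite -(subnKC s_le_m) expnD mult_INR !INR_expn Rmult_comm -Rmult_assoc.
rewrite Rinv_l ?Rmult_1_l; last by apply: pow_nonzero; lra.
by apply: Rle_pow; [rewrite -INR_1; apply: leq_INR; lia | lia].
Qed.
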